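(* In the two-shock setting ($v_\pm>0$, $u_->u_+$, intermediate state $(u_*^{\epsilon_1\epsilon_2},v_*^{\epsilon_1\epsilon_2})$, shock speeds $\sigma_1^{\epsilon_1\epsilon_2},\sigma_2^{\epsilon_1\epsilon_2}$), $$\lim_{\epsilon_1,\epsilon_2\to0}u_*^{\epsilon_1\epsilon_2}=\lim_{\epsilon_1,\epsilon_2\to0}\sigma_1^{\epsilon_1\epsilon_2}=\lim_{\epsilon_1,\epsilon_2\to0}\sigma_2^{\epsilon_1\epsilon_2}=\frac{u_-+u_+}{2}.$$
   Context: Perturbed Brio system: $u_t+(\tfrac12u^2+\tfrac12\epsilon_1v^2)_x=0$, $v_t+(uv-\epsilon_2v)_x=0$, $\epsilon_1,\epsilon_2>0$, $v>0$, with Riemann data $(u_-,v_-)$ for $x<0$, $(u_+,v_+)$ for $x>0$. A two-shock Riemann solution is one with an intermediate state $(u_*,v_* )$, $v_*>\max(v_-,v_+)$, $u_+<u_*<u_-$, such that $$u_*=u_-+(v_*-v_-)\frac{\epsilon_2-\sqrt{\epsilon_2^2+4\epsilon_1(v_*+v_-)^2}}{v_*+v_-},\qquad u_+=u_*+(v_+-v_* )\frac{\epsilon_2+\sqrt{\epsilon_2^2+4\epsilon_1(v_*+v_+)^2}}{v_*+v_+},$$ with shock speeds $\sigma_1=u_-+\frac{v_*(u_*-u_-)}{v_*-v_-}-\epsilon_2$ and $\sigma_2=u_++\frac{v_*(u_+-u_* )}{v_+-v_*}-\epsilon_2$. The limit is taken over parameters for which this solution exists. *)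

From Stdlib Require Import Reals Lra.
Open Scope R_scope.

(* (us, vs) is the intermediate state of a two-shock Riemann solution of the
   perturbed Brio system with parameters e1, e2 and data (um,vm) | (up,vp). *)
Definition two_shock (e1 e2 um vm up vp us vs : R) : Prop :=
  Rmax vm vp < vs /\ up < us /\ us < um /\
  us = um + (vs - vm) * ((e2 - sqrt (e2 ^ 2 + 4 * e1 * (vs + vm) ^ 2)) / (vs + vm)) /\
  up = us + (vp - vs) * ((e2 + sqrt (e2 ^ 2 + 4 * e1 * (vs + vp) ^ 2)) / (vs + vp)).

Definition sigma1 (e2 um vm us vs : R) : R := um + vs * (us - um) / (vs - vm) - e2.
Definition sigma2 (e2 up vp us vs : R) : R := up + vs * (up - us) / (vp - vs) - e2.

(* Put t = sqrt e1 and S_v = sqrt (e2^2 + 4 e1 (vs + v)^2), so that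
   2 t (vs + v) <= S_v <= e2 + 2 t (vs + v).  The shock conditions give the jumps
   um - us = (S_vm - e2) - 2 r and us - up = (S_vp + e2) - 2 s with
   0 <= r <= 2 t vm and 0 <= s <= 2 e2 + 2 t vp, and the speeds are
   sigma1 = us - r - e2, sigma2 = us + s - e2.  As S_vm and S_vp differ by at
   most e2 + 2 t |vm - vp|, the two jumps agree up to O(sqrt e1 + e2), uniformly
   in vs (which does blow up in the limit); hence us, sigma1 and sigma2 all lie
   within O(sqrt e1 + e2) of (um + up) / 2.  Solutions with arbitrarily small
   parameters come from the intermediate value theorem. *)

From Stdlib Require Import Reals Lra Psatz.
From Coquelicot Require Import Coquelicot.
Open Scope R_scope.

Lemma sqrt_add_sq_le (x y : R) : 0 <= x -> 0 <= y -> sqrt (x ^ 2 + y ^ 2) <= x + y.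
Proof.
  intros hx hy. rewrite <- (sqrt_pow2 (x + y)) by lra.
  apply sqrt_le_1_alt. nra.
Qed.

Lemma sqrt_add_sq_ge (x y : R) : 0 <= x -> 0 <= y ->
  x <= sqrt (x ^ 2 + y ^ 2) /\ y <= sqrt (x ^ 2 + y ^ 2).
Proof.
  intros hx hy. pose proof (sqrt_plus_sqr x y) as [hmax _].
  rewrite (Rabs_pos_eq x hx), (Rabs_pos_eq y hy) in hmax.
  pose proof (Rmax_l x y). pose proof (Rmax_r x y). lra.
Qed.

Lemma sqrt_add_pos_gt (x c : R) : 0 <= x -> 0 < c -> x < sqrt (x ^ 2 + c).
Proof.
  intros hx hc. rewrite <- (sqrt_pow2 x) at 1 by exact hx.
  apply sqrt_lt_1_alt. split; [apply pow2_ge_0 | lra].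
Qed.

Lemma shock_sqrt_bounds (e1 e2 w : R) : 0 <= e1 -> 0 <= e2 -> 0 <= w ->
  e2 <= sqrt (e2 ^ 2 + 4 * e1 * w ^ 2) /\
  2 * sqrt e1 * w <= sqrt (e2 ^ 2 + 4 * e1 * w ^ 2) <= e2 + 2 * sqrt e1 * w.
Proof.
  intros he1 he2 hw.
  assert (hsq : 4 * e1 * w ^ 2 = (2 * sqrt e1 * w) ^ 2).
  { replace ((2 * sqrt e1 * w) ^ 2) with (4 * (sqrt e1 ^ 2) * w ^ 2) by ring.
    rewrite pow2_sqrt by exact he1. reflexivity. }
  assert (hy : 0 <= 2 * sqrt e1 * w) by (pose proof (sqrt_pos e1); nra).
  rewrite hsq. destruct (sqrt_add_sq_ge e2 _ he2 hy).
  pose proof (sqrt_add_sq_le e2 _ he2 hy). lra.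
Qed.

Lemma sqrt_scale_sq (l w : R) : 0 <= l ->
  sqrt ((l ^ 2) ^ 2 + 4 * l ^ 2 * w ^ 2) = l * sqrt (l ^ 2 + 4 * w ^ 2).
Proof.
  intros hl. replace ((l ^ 2) ^ 2 + 4 * l ^ 2 * w ^ 2) with (l ^ 2 * (l ^ 2 + 4 * w ^ 2)) by ring.
  rewrite sqrt_mult_alt by apply pow2_ge_0. rewrite sqrt_pow2 by exact hl. reflexivity.
Qed.

Lemma small_sqrt_add (K eta : R) : 0 < K -> 0 < eta -> exists d, 0 < d /\
  forall e1 e2, 0 <= e1 < d -> 0 <= e2 < d -> K * (sqrt e1 + e2) < eta.
Proof.
  intros hK heta. set (c := eta / (2 * K)).
  assert (hc : 0 < c) by (unfold c; apply Rdiv_lt_0_compat; lra).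
  assert (hcK : 2 * K * c = eta) by (unfold c; field; lra).
  exists (Rmin c (c ^ 2)). split; [apply Rmin_glb_lt; nra |].
  intros e1 e2 [he1 hd1] [he2 hd2].
  pose proof (Rmin_l c (c ^ 2)). pose proof (Rmin_r c (c ^ 2)).
  assert (sqrt e1 < c).
  { rewrite <- (sqrt_pow2 c) by lra. apply sqrt_lt_1_alt. lra. }
  nra.
Qed.

Section TwoShockEstimates.

Variables e1 e2 um vm up vp us vs : R.
Hypotheses (hvm : 0 < vm) (hvp : 0 < vp) (he1 : 0 < e1) (he2 : 0 < e2)
  (Hshock : two_shock e1 e2 um vm up vp us vs).

Let S1 := sqrt (e2 ^ 2 + 4 * e1 * (vs + vm) ^ 2).
Let S2 := sqrt (e2 ^ 2 + 4 * e1 * (vs + vp) ^ 2).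
Let r := vm * (S1 - e2) / (vs + vm).
Let s := vp * (S2 + e2) / (vs + vp).

Let hvsm : vm < vs. Proof. destruct Hshock as [h _]. pose proof (Rmax_l vm vp). lra. Qed.
Let hvsp : vp < vs. Proof. destruct Hshock as [h _]. pose proof (Rmax_r vm vp). lra. Qed.

Lemma two_shock_mid_eq : us - (um + up) / 2 = ((S2 + e2) - (S1 - e2)) / 2 - s + r.
Proof.
  destruct Hshock as (_ & _ & _ & Eus & Eup).
  unfold r, s, S1, S2. rewrite Eup, Eus. field. lra.
Qed.

Lemma two_shock_sigma1_eq : sigma1 e2 um vm us vs = us - r - e2.
Proof.
  destruct Hshock as (_ & _ & _ & Eus & _).
  unfold sigma1, r, S1. rewrite Eus. field. lra.
Qed.

Lemma two_shock_sigma2_eq : sigma2 e2 up vp us vs = us + s - e2.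
Proof.
  destruct Hshock as (_ & _ & _ & _ & Eup).
  unfold sigma2, s, S2. rewrite Eup. field. lra.
Qed.

Let hS1 : e2 <= S1 /\ 2 * sqrt e1 * (vs + vm) <= S1 <= e2 + 2 * sqrt e1 * (vs + vm).
Proof. apply shock_sqrt_bounds; lra. Qed.
Let hS2 : e2 <= S2 /\ 2 * sqrt e1 * (vs + vp) <= S2 <= e2 + 2 * sqrt e1 * (vs + vp).
Proof. apply shock_sqrt_bounds; lra. Qed.

Lemma two_shock_r_bounds : 0 <= r <= 2 * sqrt e1 * vm.
Proof.
  destruct hS1 as [hlo [_ hhi]]. unfold r.
  split; [apply Rdiv_le_0_compat; nra |].
  apply Rle_div_l; nra.
Qed.

Lemma two_shock_s_bounds : 0 <= s <= 2 * e2 + 2 * sqrt e1 * vp.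
Proof.
  destruct hS2 as [hlo [_ hhi]]. pose proof (sqrt_pos e1). unfold s.
  split; [apply Rdiv_le_0_compat; nra |].
  apply Rle_div_l; nra.
Qed.

Lemma two_shock_jump_diff_abs :
  Rabs ((S2 + e2) - (S1 - e2)) <= 3 * e2 + 2 * sqrt e1 * (vm + vp).
Proof.
  destruct hS1 as [_ [lo1 hi1]]. destruct hS2 as [_ [lo2 hi2]].
  pose proof (sqrt_pos e1). apply Rabs_le. split; nra.
Qed.

Lemma two_shock_deviation_le :
  let K := 5 * (1 + vm + vp) * (sqrt e1 + e2) in
  Rabs (us - (um + up) / 2) <= K /\
  Rabs (sigma1 e2 um vm us vs - (um + up) / 2) <= K /\
  Rabs (sigma2 e2 up vp us vs - (um + up) / 2) <= K.
Proof.
  intros K. rewrite two_shock_sigma1_eq, two_shock_sigma2_eq.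
  pose proof two_shock_mid_eq as Emid.
  pose proof two_shock_r_bounds. pose proof two_shock_s_bounds.
  pose proof two_shock_jump_diff_abs as hjump.
  pose proof (Rle_abs ((S2 + e2) - (S1 - e2))).
  pose proof (Rle_abs (- ((S2 + e2) - (S1 - e2)))). rewrite Rabs_Ropp in *.
  pose proof (sqrt_pos e1). unfold K.
  repeat split; apply Rabs_le; nra.
Qed.

End TwoShockEstimates.

(* The balance equation splits [um - up] into the two jumps, both positive. *)
Lemma two_shock_of_balance (e1 e2 um vm up vp vs : R) :
  0 < vm -> 0 < vp -> Rmax vm vp < vs -> 0 < e1 -> 0 <= e2 ->
  um - up = (vs - vm) / (vs + vm) * (sqrt (e2 ^ 2 + 4 * e1 * (vs + vm) ^ 2) - e2)
          + (vs - vp) / (vs + vp) * (sqrt (e2 ^ 2 + 4 * e1 * (vs + vp) ^ 2) + e2) ->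
  two_shock e1 e2 um vm up vp
    (um + (vs - vm) * ((e2 - sqrt (e2 ^ 2 + 4 * e1 * (vs + vm) ^ 2)) / (vs + vm))) vs.
Proof.
  intros hvm hvp hvs he1 he2 Hbal.
  pose proof (Rmax_l vm vp). pose proof (Rmax_r vm vp).
  assert (hS1 : e2 < sqrt (e2 ^ 2 + 4 * e1 * (vs + vm) ^ 2))
    by (apply sqrt_add_pos_gt; [lra | apply Rmult_lt_0_compat; [lra | apply pow_lt; lra]]).
  assert (hS2 : e2 < sqrt (e2 ^ 2 + 4 * e1 * (vs + vp) ^ 2))
    by (apply sqrt_add_pos_gt; [lra | apply Rmult_lt_0_compat; [lra | apply pow_lt; lra]]).
  assert (hjump1 : 0 < (vs - vm) / (vs + vm) * (sqrt (e2 ^ 2 + 4 * e1 * (vs + vm) ^ 2) - e2))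
    by (apply Rmult_lt_0_compat; [apply Rdiv_lt_0_compat |]; lra).
  assert (hjump2 : 0 < (vs - vp) / (vs + vp) * (sqrt (e2 ^ 2 + 4 * e1 * (vs + vp) ^ 2) + e2))
    by (apply Rmult_lt_0_compat; [apply Rdiv_lt_0_compat |]; lra).
  unfold two_shock.
  replace ((vs - vm) * ((e2 - sqrt (e2 ^ 2 + 4 * e1 * (vs + vm) ^ 2)) / (vs + vm)))
    with (- ((vs - vm) / (vs + vm) * (sqrt (e2 ^ 2 + 4 * e1 * (vs + vm) ^ 2) - e2)))
    by (field; lra).
  replace ((vp - vs) * ((e2 + sqrt (e2 ^ 2 + 4 * e1 * (vs + vp) ^ 2)) / (vs + vp)))
    with (- ((vs - vp) / (vs + vp) * (sqrt (e2 ^ 2 + 4 * e1 * (vs + vp) ^ 2) + e2)))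
    by (field; lra).
  repeat split; lra.
Qed.

(* With [e1 = e2 = l^2] and [vs] of order [(um - up) / l0], the right-hand side
   of the balance equation vanishes at [l = 0] and exceeds [(vs - vm) l] at
   [l = l0], so it equals [um - up] somewhere in [(0, l0]]. *)
Lemma two_shock_exists (um vm up vp l0 : R) : 0 < vm -> 0 < vp -> up < um -> 0 < l0 <= 1 ->
  exists l us vs, 0 < l <= l0 /\ two_shock (l ^ 2) (l ^ 2) um vm up vp us vs.
Proof.
  intros hvm hvp hu hl0.
  set (vs := Rmax vm vp + (um - up) / l0 + 1).
  pose proof (Rmax_l vm vp). pose proof (Rmax_r vm vp).
  assert (hD : 0 < (um - up) / l0) by (apply Rdiv_lt_0_compat; lra).
  set (a := vs + vm). set (b := vs + vp).
  assert (ha : 1 <= a) by (unfold a, vs; lra). assert (hb : 0 < b) by (unfold b, vs; lra).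
  set (g := fun l => (vs - vm) / a * (l * sqrt (l ^ 2 + 4 * a ^ 2) - l ^ 2)
                   + (vs - vp) / b * (l * sqrt (l ^ 2 + 4 * b ^ 2) + l ^ 2) - (um - up)).
  assert (g_cont : continuity g).
  { intros l. apply continuity_pt_filterlim, (ex_derive_continuous g). unfold g.
    auto_derive. split; [nra | split; [nra | exact I]]. }
  assert (g0 : g 0 < 0) by (unfold g; ring_simplify; lra).
  assert (gl0 : 0 < g l0).
  { assert (hsqrt : 2 * a <= sqrt (l0 ^ 2 + 4 * a ^ 2)).
    { replace (4 * a ^ 2) with ((2 * a) ^ 2) by ring. apply sqrt_add_sq_ge; lra. }
    assert (hk0 : 0 <= (vs - vm) / a) by (apply Rdiv_le_0_compat; unfold vs; lra).
    assert (hm : 0 <= (vs - vp) / b * (l0 * sqrt (l0 ^ 2 + 4 * b ^ 2) + l0 ^ 2)).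
    { pose proof (sqrt_pos (l0 ^ 2 + 4 * b ^ 2)).
      apply Rmult_le_pos; [apply Rdiv_le_0_compat; unfold vs; lra | nra]. }
    assert (hT : a * l0 <= l0 * sqrt (l0 ^ 2 + 4 * a ^ 2) - l0 ^ 2) by nra.
    apply (Rmult_le_compat_l ((vs - vm) / a)) in hT; [| exact hk0].
    replace ((vs - vm) / a * (a * l0)) with ((vs - vm) * l0) in hT by (field; lra).
    assert (hD0 : (um - up) / l0 * l0 = um - up) by (field; lra).
    assert (hvl : (um - up) + l0 <= (vs - vm) * l0) by (unfold vs; nra).
    unfold g. lra. }
  destruct (IVT g 0 l0 g_cont ltac:(lra) g0 gl0) as [l [[hl_ge hl_le] gl]].
  assert (hl : 0 < l) by (destruct hl_ge as [? | <-]; [assumption | lra]).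
  eexists l, _, vs. split; [lra |].
  apply two_shock_of_balance;
    [lra | lra | unfold vs; lra | apply pow_lt; lra | apply pow2_ge_0 |].
  rewrite !sqrt_scale_sq by lra. fold a b. unfold g in gl. lra.
Qed.

Theorem lemma5p3 (um vm up vp : R) (hvm : 0 < vm) (hvp : 0 < vp) (hu : up < um) :
  (forall d : R, 0 < d -> exists e1 e2 us vs : R,
      0 < e1 < d /\ 0 < e2 < d /\ two_shock e1 e2 um vm up vp us vs) /\
  (forall eta : R, 0 < eta -> exists d : R, 0 < d /\
     forall e1 e2 us vs : R, 0 < e1 < d -> 0 < e2 < d ->
       two_shock e1 e2 um vm up vp us vs ->
       Rabs (us - (um + up) / 2) < eta /\
       Rabs (sigma1 e2 um vm us vs - (um + up) / 2) < eta /\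
       Rabs (sigma2 e2 up vp us vs - (um + up) / 2) < eta).
Proof.
  split.
  - intros d hd.
    pose proof (Rmin_l 1 (d / 2)). pose proof (Rmin_r 1 (d / 2)).
    destruct (two_shock_exists um vm up vp (Rmin 1 (d / 2)) hvm hvp hu)
      as (l & us & vs & hl & Hshock); [split; [apply Rmin_glb_lt |]; lra |].
    assert (hl2 : 0 < l ^ 2 < d) by (split; [apply pow_lt |]; nra).
    exists (l ^ 2), (l ^ 2), us, vs. auto.
  - intros eta heta.
    destruct (small_sqrt_add (5 * (1 + vm + vp)) eta ltac:(lra) heta) as (d & hd & Hsmall).
    exists d. split; [exact hd |]. intros e1 e2 us vs he1 he2 Hshock.
    pose proof (Hsmall e1 e2 ltac:(lra) ltac:(lra)).
    destruct (two_shock_deviation_le e1 e2 um vm up vp us vs hvm hvp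
                ltac:(lra) ltac:(lra) Hshock) as (B1 & B2 & B3).
    repeat split; lra.
Qed.
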